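(* For every multiway system $M=(R,s,\Sigma)$ there is a multiway system $M'=(R',s',\{a,b\})$, where $a,b$ are two distinct symbols, such that the states graphs of $M$ and $M'$ are isomorphic.
   Context: A (string-based) multiway system is a triple $(R,s,\Sigma)$ with $\Sigma$ a finite alphabet, $R$ a finite set of string replacement rules $r\to t$ with $r,t\in\Sigma^*$, and initial string $s\in\Sigma^*$. Its states graph is the directed graph whose vertices are the strings reachable from $s$ by repeated rule application, with an edge $u\to v$ whenever $v$ arises from $u$ by replacing one occurrence of some rule's left side $r$ in $u$ by the corresponding right side $t$. *)

From mathcomp Require Import all_boot.
Set Implicit Arguments. Unset Strict Implicit. Unset Printing Implicit Defensive.

Record multiway (Sigma : finType) := Multiway {
  mw_rules : seq (seq Sigma * seq Sigma);
  mw_init  : seq Sigma }.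

Definition mw_step (Sigma : finType) (M : multiway Sigma) (u v : seq Sigma) : Prop :=
  exists r t x y, (r, t) \in mw_rules M /\ u = x ++ r ++ y /\ v = x ++ t ++ y.

(* Strings reachable from the initial string by repeated rule application
   (zero or more steps): the vertices of the states graph. *)
Inductive mw_reachable (Sigma : finType) (M : multiway Sigma) : seq Sigma -> Prop :=
| mw_reach_init : mw_reachable M (mw_init M)
| mw_reach_step u v : mw_reachable M u -> mw_step M u v -> mw_reachable M v.

Definition states_graph_iso (S1 S2 : finType) (M1 : multiway S1) (M2 : multiway S2) : Prop :=
  exists (f : seq S1 -> seq S2) (g : seq S2 -> seq S1),
    (forall u, mw_reachable M1 u -> mw_reachable M2 (f u) /\ g (f u) = u) /\
    (forall w, mw_reachable M2 w -> mw_reachable M1 (g w) /\ f (g w) = w) /\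
    (forall u v, mw_reachable M1 u -> mw_reachable M1 v ->
       (mw_step M1 u v <-> mw_step M2 (f u) (f v))).

(* Letters are written over {false, true} with the prefix code
   [s |-> false^(pickle s) true], and a string is encoded as [true] followed by
   the codewords of its letters.  Because every encoded string starts with
   [true] and every codeword ends with it, an occurrence of an encoded left
   side inside an encoded string can only start right after a codeword
   boundary; the prefix property then shows that it covers whole codewords of
   an occurrence of the left side itself.  So the encoding maps the one-step
   rewrites of M exactly onto those of the encoded system, and the reachable
   strings of the latter are exactly the encodings of reachable strings. *)
From mathcomp Require Import all_boot.
Set Implicit Arguments. Unset Strict Implicit.

Section StepEmbedding.
Variables (S1 S2 : finType) (M1 : multiway S1) (M2 : multiway S2).
Variables (f : seq S1 -> seq S2) (g : seq S2 -> seq S1).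
Hypothesis fK : cancel f g.
Hypothesis f_init : f (mw_init M1) = mw_init M2.
Hypothesis f_step : forall u v, mw_step M1 u v -> mw_step M2 (f u) (f v).
Hypothesis f_step_inv :
  forall u w, mw_step M2 (f u) w -> exists2 v, w = f v & mw_step M1 u v.

Lemma reachable_embed u : mw_reachable M1 u -> mw_reachable M2 (f u).
Proof.
elim=> [|v w _ IHv /f_step st]; first by rewrite f_init; constructor.
exact: mw_reach_step IHv st.
Qed.

Lemma reachable_embed_inv w :
  mw_reachable M2 w -> exists2 u, mw_reachable M1 u & w = f u.
Proof.
elim=> [|w1 w2 _ [u reach_u ->] /f_step_inv [v -> st]].
  by exists (mw_init M1); [constructor | rewrite f_init].
by exists v; first exact: mw_reach_step reach_u st.
Qed.

Lemma states_graph_iso_of_step_embedding : states_graph_iso M1 M2.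
Proof.
exists f, g; split; last split.
- by move=> u reach_u; rewrite fK; split; first exact: reachable_embed.
- by move=> w /reachable_embed_inv [u reach_u ->]; rewrite fK.
- move=> u v _ _; split; first exact: f_step.
  by case/f_step_inv=> v' /(can_inj fK) ->.
Qed.

End StepEmbedding.

Lemma nseq_false_true_inj m n (A B : seq bool) :
  nseq m false ++ true :: A = nseq n false ++ true :: B -> m = n /\ A = B.
Proof.
elim: m n => [|m IH] [|n] //=; first by case.
by case=> /IH [-> ->].
Qed.

Lemma nseq_false_true_split n (A X B : seq bool) :
  nseq n false ++ true :: A = X ++ true :: B ->
  (X = nseq n false /\ A = B) \/
  exists2 X', X = nseq n false ++ true :: X' & A = X' ++ true :: B.
Proof.
elim: n X => [|n IH] [|x X] //=.
- by case=> ->; left.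
- by case=> -> ->; right; exists X.
- by case=> <- /IH [[-> ->] | [X' -> ->]]; [left | right; exists X'].
Qed.

Section Encoding.
Variable Sigma : finType.
Implicit Types (s : Sigma) (u r x y : seq Sigma) (X Y : seq bool).

Definition code s : seq bool := nseq (pickle s) false ++ [:: true].
Definition codes u : seq bool := flatten (map code u).
Definition enc u : seq bool := true :: codes u.

(* [k] counts the [false]s read since the last codeword boundary. *)
Fixpoint decode_from (k : nat) (w : seq bool) : seq Sigma :=
  match w with
  | [::] => [::]
  | false :: w' => decode_from k.+1 w'
  | true :: w' =>
      if unpickle k is Some s then s :: decode_from 0 w' else decode_from 0 w'
  end.
Definition dec (w : seq bool) : seq Sigma := decode_from 0 (behead w).

Lemma decode_from_nseq k n w :
  decode_from k (nseq n false ++ w) = decode_from (k + n) w.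
Proof. by elim: n k => [|n IH] k /=; rewrite ?addn0 ?IH ?addnS. Qed.

Lemma encK : cancel enc dec.
Proof.
rewrite /dec /enc /= /codes; elim=> [|s u IH] //=.
by rewrite /code -catA decode_from_nseq /= pickleK IH.
Qed.

Lemma codes_cat u v : codes (u ++ v) = codes u ++ codes v.
Proof. by rewrite /codes map_cat flatten_cat. Qed.

Lemma last_codes u : last true (codes u) = true.
Proof. by elim: u => [|s u IH] //=; rewrite last_cat /code cats1 last_rcons. Qed.

Lemma enc_cat u v : enc (u ++ v) = belast true (codes u) ++ enc v.
Proof.
rewrite /enc codes_cat -cat_rcons -cat_cons; congr (_ ++ _).
by rewrite -[X in rcons _ X](last_codes u) -lastI.
Qed.

Lemma codes_split_true u X Y : codes u = X ++ true :: Y ->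
  exists x y, [/\ u = x ++ y, rcons X true = codes x & Y = codes y].
Proof.
elim: u X => [|s u IH] X; first by case: X.
rewrite /codes /= -/(codes u) /code -catA /=.
case/nseq_false_true_split=> [[-> <-] | [X' -> /IH [x [y [-> eX' ->]]]]].
  by exists [:: s], u; rewrite /codes /= /code cats0 cats1.
by exists (s :: x), y; rewrite /codes /= -/(codes x) -eX' /code -catA rcons_cat.
Qed.

Lemma enc_split_true u X Y : enc u = X ++ true :: Y ->
  exists x y, [/\ u = x ++ y, rcons X true = enc x & Y = codes y].
Proof.
rewrite /enc; case: X => [[<-] | b X [<- /codes_split_true [x [y [-> eX ->]]]]].
  by exists [::], u.
by exists x, y; rewrite /enc -eX.
Qed.

Lemma codes_prefix u r Y : codes u = codes r ++ Y ->
  exists2 y, u = r ++ y & Y = codes y.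
Proof.
elim: r u => [|s r IH] u; first by exists u.
case: u => [|t u]; first by rewrite /codes /= /code; case: (pickle s).
rewrite /codes /= /code -!catA /=.
by case/nseq_false_true_inj=> /(pcan_inj pickleK) -> /IH [y -> ->]; exists y.
Qed.

Lemma enc_occurrence u X r Y : enc u = X ++ enc r ++ Y ->
  exists x y, [/\ u = x ++ r ++ y, rcons X true = enc x & Y = codes y].
Proof.
case/enc_split_true=> x [y'] [-> eX /esym/codes_prefix [y -> ->]].
by exists x, y.
Qed.

Definition enc_multiway (M : multiway Sigma) : multiway bool :=
  Multiway [seq (enc rt.1, enc rt.2) | rt <- mw_rules M] (enc (mw_init M)).

Lemma enc_step M u v : mw_step M u v -> mw_step (enc_multiway M) (enc u) (enc v).
Proof.
move=> [r [t [x [y [rt_in [-> ->]]]]]].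
exists (enc r), (enc t), (belast true (codes x)), (codes y).
split; first by apply/mapP; exists (r, t).
by split; rewrite enc_cat /enc codes_cat.
Qed.

Lemma enc_step_inv M u w : mw_step (enc_multiway M) (enc u) w ->
  exists2 v, w = enc v & mw_step M u v.
Proof.
move=> [_ [_ [X [Y [/mapP [[r t] rt_in [-> ->]] [eu ->]]]]]].
have [x [y [-> eX ->]]] := enc_occurrence eu.
exists (x ++ t ++ y); last by exists r, t, x, y.
by rewrite -cat_rcons eX /enc /= !codes_cat.
Qed.

End Encoding.

(* The two-letter alphabet {a, b} is represented by [bool]. *)
Theorem lemma4 (Sigma : finType) (M : multiway Sigma) :
  exists M' : multiway bool, states_graph_iso M M'.
Proof.
exists (enc_multiway M).
apply: (states_graph_iso_of_step_embedding (@encK Sigma)) => //.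
- exact: enc_step.
- exact: enc_step_inv.
Qed.
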